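(* Let $\mathcal{Q}$ be a set of generalized quantifiers of width $1$, $d\in\mathbb{N}$, and $(\mathfrak{M},w)$, $(\mathfrak{N},v)$ pointed Kripke models. If $\mathfrak{N},v\Vdash\varphi^{\mathcal{Q},d}_{\mathfrak{M}\sqcup\mathfrak{N},w}$, then $\mathfrak{M},w\sim^d_{\mathcal{Q}}\mathfrak{N},v$.
   Context: Kripke models: fix a finite set $\Phi$ of proposition symbols. A Kripke model is $\mathfrak{M}=(V,E,\ell)$ with $V$ a finite non-empty set, $E\subseteq V\times V$, and $\ell:V\to\mathcal{P}(\Phi)$. For $u\in V$, $N(u)=\{u'\mid (u,u')\in E\}$. A pointed Kripke model is $(\mathfrak{M},w)$ with $w\in V$; $\mathfrak{M}\sqcup\mathfrak{N}$ is the disjoint union. A generalized quantifier (of width 1) is a class $Q$ of pairs $(D,P)$ with $P\subseteq D$, closed under isomorphism; $\mathfrak{M},u\Vdash\langle Q\rangle\varphi$ iff $(N(u),\{u'\in N(u)\mid \mathfrak{M},u'\Vdash\varphi\})\in Q$. $\mathrm{PL}(\mathcal{Q})$: formulas $\varphi::=\bot\mid p\mid\neg\varphi\mid\varphi\wedge\varphi\mid\varphi\vee\varphi\mid\langle Q\rangle\varphi$, usual Boolean semantics, $\mathfrak{M},u\Vdash p$ iff $p\in\ell(u)$; $\equiv^d_{\mathrm{PL}(\mathcal{Q})}$ is indistinguishability by formulas of modal depth $\le d$. Types: for a Kripke model $\mathfrak{K}$ and $u\in\mathfrak{K}$, $\varphi^{\mathcal{Q},0}_{\mathfrak{K},u}=\bigwedge\{p\mid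 \mathfrak{K},u\Vdash p\}\wedge\bigwedge\{\neg p\mid \mathfrak{K},u\Vdash\neg p\}$, and $\varphi^{\mathcal{Q},d+1}_{\mathfrak{K},u}$ is the conjunction of $\varphi^{\mathcal{Q},0}_{\mathfrak{K},u}$, of all $\langle Q\rangle\bigvee_{\psi\in C}\psi$ true at $(\mathfrak{K},u)$, and of all $\neg\langle Q\rangle\bigvee_{\psi\in C}\psi$ true at $(\mathfrak{K},u)$, where $Q$ ranges over $\mathcal{Q}$ and $C$ over subsets of $\{\varphi^{\mathcal{Q},d}_{\mathfrak{K},u'}\mid u'\in\mathfrak{K}\}$ (infinitary conjunctions allowed if $\mathcal{Q}$ is infinite; satisfied iff every conjunct is). $\mathcal{Q}$-bisimulation game on $(\mathfrak{M},w)$, $(\mathfrak{N},v)$: two pebbles start on $w$ and $v$; Player 1 starts as attacker, Player 2 as defender (roles may swap). At the start of a round the pebbles lie on nodes $a,b$ of $\mathfrak{M}\sqcup\mathfrak{N}$. (i) The attacker selects one pebble, say on $a$, a $Q\in\mathcal{Q}$, and $X\subseteq N(a)$ with $(N(a),X)\in Q$; then chooses $P\subseteq N(b)$. The defender may contest $P$ by placing one pebble on a node of $P$ and the other on a node of $N(a)$; a new round starts. (ii) Otherwise the defender chooses $X'\subseteq N(b)$ with $(N(b),X')\in Q$ and $P\subseteq X'$. (iii) The attacker either moves one pebble onto a node of $N(b)\setminus X'$ and the other onto a node of $X$ and the players swap roles, or moves one pebble onto a node of $X'$, after which the defender moves the other onto a node of $X\cup P$; a new round starts. (iv) Whenever $X$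 (resp. $X'$) is chosen, the other player may contest it by moving one pebble onto a node of that set and the other onto a node of $N(a)\setminus X$ (resp. $N(b)\setminus X'$), then taking the role of defender; a new round starts. The current attacker wins if at the start of a round the pebbled nodes disagree on some proposition symbol; a player who must choose a subset but cannot loses; infinite plays are won by Player 2. In the $d$-round game Player 2 wins if Player 1 has not won after $d$ rounds; $\mathfrak{M},w\sim^d_{\mathcal{Q}}\mathfrak{N},v$ means Player 2 has a winning strategy in it. *)

From mathcomp Require Import all_boot.
Set Implicit Arguments.
Unset Strict Implicit.
Unset Printing Implicit Defensive.

(* V is a finite type (non-emptiness is automatic for pointed models). *)
Record kripke (Phi : finType) := Kripke {
  kV :> finType;
  kE : rel kV;
  klab : kV -> {set Phi} }.
Arguments kE {Phi} k _ _.
Arguments klab {Phi} k _.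

Definition nbh (Phi : finType) (M : kripke Phi) (u : M) : {set M} := [set y | kE M u y].

Definition dunion (Phi : finType) (M N : kripke Phi) : kripke Phi :=
  @Kripke Phi (M + N)%type
    (fun x y => match x, y with
                | inl a, inl b => kE M a b
                | inr a, inr b => kE N a b
                | _, _ => false end)
    (fun x => match x with inl a => klab M a | inr b => klab N b end).

(* A class of pairs (D, P) with P ⊆ D (P given as a predicate on D),
   closed under isomorphism (which includes extensional equality of P). *)
Record gquant := GQuant {
  gq_mem : forall D : Type, (D -> Prop) -> Prop;
  gq_iso : forall (D D' : Type) (f : D -> D') (g : D' -> D),
      cancel f g -> cancel g f ->
      forall (P : D -> Prop) (P' : D' -> Prop),
      (forall x, P' (f x) <-> P x) -> gq_mem P -> gq_mem P' }.

Inductive form (Phi : finType) : Type :=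
| fBot
| fVar (p : Phi)
| fNeg (phi : form Phi)
| fAnd (phi psi : form Phi)
| fOr (phi psi : form Phi)
| fMod (Q : gquant) (phi : form Phi)
| fBigAnd (I : Type) (F : I -> form Phi)
| fBigOr (I : Type) (F : I -> form Phi).

Fixpoint sat (Phi : finType) (M : kripke Phi) (phi : form Phi) : M -> Prop :=
  match phi with
  | fBot => fun _ => False
  | fVar p => fun u => p \in klab M u
  | fNeg f => fun u => ~ @sat Phi M f u
  | fAnd f g => fun u => @sat Phi M f u /\ @sat Phi M g u
  | fOr f g => fun u => @sat Phi M f u \/ @sat Phi M g u
  | fMod Q f => fun u => @gq_mem Q {y : M | kE M u y} (fun y => @sat Phi M f (val y))
  | @fBigAnd _ J F => fun u => forall i : J, @sat Phi M (F i) u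
  | @fBigOr _ J F => fun u => exists i : J, @sat Phi M (F i) u
  end.

Definition type0 (Phi : finType) (K : kripke Phi) (u : K) : form Phi :=
  fAnd (fBigAnd (fun p : {p : Phi | p \in klab K u} => fVar (val p)))
       (fBigAnd (fun p : {p : Phi | p \notin klab K u} => fNeg (fVar (val p)))).

(* <Q> \/ C, where C = { phi^{d}_{K,u'} | u' in S } ; every subset C of
   the set of depth-d types arises this way from some S. *)
Definition modC (Phi : finType) (K : kripke Phi) (Q : gquant) (S : {set K})
  (ty : K -> form Phi) : form Phi :=
  fMod Q (fBigOr (fun u' : {u' : K | u' \in S} => ty (val u'))).

Fixpoint qtype (Phi : finType) (QS : gquant -> Prop) (d : nat) (K : kripke Phi) (u : K)
  : form Phi :=
  match d with
  | 0 => type0 u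
  | d'.+1 =>
    let ty := fun u' : K => @qtype Phi QS d' K u' in
    fAnd (type0 u)
      (fAnd
        (fBigAnd (fun i : {i : {Q : gquant | QS Q} * {set K} |
                             @sat _ K (modC (sval i.1) i.2 ty) u} =>
                    modC (sval (sval i).1) (sval i).2 ty))
        (fBigAnd (fun i : {i : {Q : gquant | QS Q} * {set K} |
                             @sat _ K (fNeg (modC (sval i.1) i.2 ty)) u} =>
                    fNeg (modC (sval (sval i).1) (sval i).2 ty))))
  end.

(* Choice made by a player: if that player is Player 2, Player 2 needs SOME
   good choice; otherwise (Player 1) ALL choices must be good for Player 2.
   An empty set of options makes Player 2 lose (resp. win), i.e. a player
   who must choose but cannot loses. *)
Definition choose (isP2 : bool) (T : Type) (P : T -> Prop) : Prop :=
  if isP2 then exists t, P t else forall t, P t.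
Definition choose2 (isP2 : bool) (A B : Prop) : Prop :=
  if isP2 then A \/ B else A /\ B.

(* p2wins QS r att2 a b : Player 2 has a winning strategy in the game with
   r remaining rounds, pebbles on a and b (nodes of the disjoint union K),
   where att2 = true iff Player 2 is currently the attacker. *)
Fixpoint p2wins (Phi : finType) (QS : gquant -> Prop) (K : kripke Phi)
  (r : nat) (att2 : bool) (a0 b0 : K) {struct r} : Prop :=
  if klab K a0 != klab K b0 then is_true att2 (* current attacker wins *) else
  match r with
  | 0 => True
  | r'.+1 =>
    let W := @p2wins Phi QS K r' in
    (* attacker selects a pebble: it lies on a, the other on b *)
    choose att2 (fun s : bool => let a := if s then a0 else b0 in let b := if s then b0 else a0 in
    (* (i) attacker selects Q and X ⊆ N(a) with (N(a),X) ∈ Q *)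
    choose att2 (fun Q : {Q : gquant | QS Q} =>
    choose att2 (fun X : {X : {set K} | X \subset nbh a /\
                    @gq_mem (sval Q) {y : K | kE K a y} (fun y => val y \in X)} =>
    choose2 (~~ att2)
      (* (iv) defender contests X *)
      (choose (~~ att2) (fun x : {x : K | x \in sval X} =>
       choose (~~ att2) (fun y : {y : K | y \in nbh a :\: sval X} => W att2 (val x) (val y))))
      (* attacker chooses P ⊆ N(b) *)
      (choose att2 (fun P : {P : {set K} | P \subset nbh b} =>
       choose2 (~~ att2)
         (* defender contests P *)
         (choose (~~ att2) (fun x : {x : K | x \in sval P} =>
          choose (~~ att2) (fun y : {y : K | y \in nbh a} => W att2 (val x) (val y))))
         (* (ii) defender chooses X' ⊆ N(b), (N(b),X') ∈ Q, P ⊆ X' *)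
         (choose (~~ att2) (fun X' : {X' : {set K} | [/\ X' \subset nbh b,
                    @gq_mem (sval Q) {y : K | kE K b y} (fun y => val y \in X')
                    & sval P \subset X']} =>
          choose2 att2
            (* (iv) attacker contests X' and becomes defender *)
            (choose att2 (fun x : {x : K | x \in sval X'} =>
             choose att2 (fun y : {y : K | y \in nbh b :\: sval X'} => W (~~ att2) (val x) (val y))))
            (choose2 att2
              (* (iii) first option: N(b)\X' and X, roles swap *)
              (choose att2 (fun y : {y : K | y \in nbh b :\: sval X'} =>
               choose att2 (fun x : {x : K | x \in sval X} => W (~~ att2) (val y) (val x))))
              (* (iii) second option: X', then defender answers in X ∪ P *)
              (choose att2 (fun y : {y : K | y \in sval X'} =>
               choose (~~ att2) (fun x : {x : K | x \in sval X :|: sval P} => W att2 (val y) (val x))))))))))))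
  end.

Definition bisim_d (Phi : finType) (QS : gquant -> Prop) (d : nat)
  (M : kripke Phi) (w : M) (N : kripke Phi) (v : N) : Prop :=
  p2wins QS (K := dunion M N) d false (inl w) (inr v).

(* Player 2 maintains the invariant that, with r rounds left, the pebbled
   nodes a and b satisfy each other's depth-r type.  As defender she answers
   a challenge (Q, X) at a by the set X' of neighbours of b realising one of
   the types realised in X or in the attacker's P: type equivalence of a and b
   transfers (N(a), X) ∈ Q to (N(b), X'), and every move of the attacker then
   lands on a type-equivalent pair or on a pair she can attack.  When the
   depth-(r+1) types of a and b differ, some formula <Q> \/ C separates them,
   and Player 2 as attacker challenges with the neighbours of a realising C;
   whatever set X' the defender answers with, it differs from the set of
   C-realisers in N(b), and either kind of difference gives a winning move. *)
From mathcomp Require Import all_boot boolp.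

Set Implicit Arguments.
Unset Strict Implicit.
Unset Printing Implicit Defensive.

Lemma gq_mem_ext (Q : gquant) (D : Type) (P P' : D -> Prop) :
  (forall x, P x <-> P' x) -> gq_mem Q P -> gq_mem Q P'.
Proof. by move=> PP'; apply: (@gq_iso Q D D id id) => // x; exact: iff_sym. Qed.

Lemma gq_mem_separate (Q : gquant) (D : Type) (P P' : D -> Prop) :
  gq_mem Q P -> ~ gq_mem Q P' -> exists x, ~ (P x <-> P' x).
Proof.
move=> QP nQP'; apply: contrapT => nsep; apply: nQP'; apply: gq_mem_ext QP => x.
by apply: contrapT => PP'; apply: nsep; exists x.
Qed.

Section TypeEquivalence.
Variables (Phi : finType) (QS : gquant -> Prop) (K : kripke Phi).

Definition type_equiv r (a b : K) : Prop := sat (qtype QS r a) b.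

Definition in_types r (S : {set K}) (y : K) : Prop :=
  exists u : {u | u \in S}, type_equiv r (val u) y.

(* The truth value at u of <Q> \/ {type r s | s \in S}. *)
Definition mod_types r (Q : gquant) (S : {set K}) (u : K) : Prop :=
  gq_mem Q (fun y : {y | kE K u y} => in_types r S (val y)).

Lemma sat_type0 (a b : K) : sat (type0 a) b <-> klab K a = klab K b.
Proof.
split=> [[pos neg]|ab]; last by split=> -[p] /=; rewrite -ab // => /negP.
apply/setP => p; case: (boolP (p \in klab K a)) => ap.
- by rewrite (pos (exist _ p ap)).
- by apply/esym/negbTE/negP; exact: (neg (exist _ p ap)).
Qed.

Lemma type_equivS r (a b : K) :
  type_equiv r.+1 a b <-> klab K a = klab K b /\
    forall Q, QS Q -> forall S, mod_types r Q S a <-> mod_types r Q S b.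
Proof.
rewrite /type_equiv /=; split=> [[ab [pos neg]]|[ab QSab]].
  split=> [|Q QSQ S]; first exact/sat_type0.
  split=> [aS|bS]; first exact: (pos (exist _ (exist _ Q QSQ, S) aS)).
  by apply: contrapT => naS; exact: (neg (exist _ (exist _ Q QSQ, S) naS)).
split; first exact/sat_type0.
split=> -[[[Q QSQ] S] /= aS]; first exact/(QSab Q QSQ S).
by move=> bS; apply: aS; apply/(QSab Q QSQ S).
Qed.

Lemma not_type_equivS r (a b : K) :
  klab K a = klab K b -> ~ type_equiv r.+1 a b ->
  exists2 Q, QS Q & exists S,
    mod_types r Q S a /\ ~ mod_types r Q S b \/
    mod_types r Q S b /\ ~ mod_types r Q S a.
Proof.
move=> ab nab; apply: contrapT => nQS; apply: nab; apply/type_equivS; split=> // Q QSQ S.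
by split=> Qu; apply: contrapT => nQv; apply: nQS; exists Q => //; exists S; tauto.
Qed.

Lemma type_equiv_labels r (a b : K) : type_equiv r a b -> klab K a = klab K b.
Proof. by case: r => [/sat_type0|r /type_equivS[]]. Qed.

Lemma type_equiv_refl r (a : K) : type_equiv r a a.
Proof. by case: r => [|r]; [apply/sat_type0 | apply/type_equivS]. Qed.

Lemma type_equiv_sym r (a b : K) : type_equiv r a b -> type_equiv r b a.
Proof.
case: r => [/sat_type0 ab|r /type_equivS[ab QSab]]; first exact/sat_type0.
by apply/type_equivS; split=> // Q QSQ S; exact: iff_sym (QSab Q QSQ S).
Qed.

Lemma type_equiv_trans r (a b c : K) :
  type_equiv r a b -> type_equiv r b c -> type_equiv r a c.
Proof.
case: r => [/sat_type0 ab /sat_type0 bc|r /type_equivS[ab QSab] /type_equivS[bc QSbc]].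
  by apply/sat_type0; rewrite ab.
apply/type_equivS; split=> [|Q QSQ S]; first by rewrite ab.
exact: iff_trans (QSab Q QSQ S) (QSbc Q QSQ S).
Qed.

Lemma in_types_mem r (S : {set K}) (y : K) : y \in S -> in_types r S y.
Proof. by move=> Sy; exists (exist _ y Sy); exact: type_equiv_refl. Qed.

Lemma in_types_equiv r S (x y : K) :
  in_types r S x -> type_equiv r x y -> in_types r S y.
Proof. by move=> [u ux] xy; exists u; exact: type_equiv_trans ux xy. Qed.

Definition nbh_types r (u : K) (S : {set K}) : {set K} :=
  [set y | kE K u y & `[< in_types r S y >]].

Lemma mem_nbh_types r u S y :
  y \in nbh_types r u S <-> kE K u y /\ in_types r S y.
Proof. by rewrite inE; split=> [/andP[-> /asboolP]|[-> /asboolP]]. Qed.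

Lemma nbh_types_sub r u S : nbh_types r u S \subset nbh u.
Proof. by apply/subsetP => y /mem_nbh_types[uy _]; rewrite inE. Qed.

Lemma gq_mem_nbh_types r Q u S :
  gq_mem Q (fun y : {y | kE K u y} => val y \in nbh_types r u S) <->
  mod_types r Q S u.
Proof.
have nbhS y : kE K u y -> (y \in nbh_types r u S <-> in_types r S y).
  by move=> uy; rewrite mem_nbh_types; tauto.
split; apply: gq_mem_ext => -[y uy] /=; first exact: nbhS.
exact: iff_sym (nbhS y uy).
Qed.

Lemma not_type_equiv_outside r u S (x y : K) :
  in_types r S x -> y \in nbh u :\: nbh_types r u S -> ~ type_equiv r x y.
Proof.
move=> Sx; rewrite inE => /andP[/negP ny uy] xy; apply: ny; apply/mem_nbh_types.
by split; [rewrite inE in uy | exact: in_types_equiv Sx xy].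
Qed.

Lemma uncontested_in_types r (a : K) (X P : {set K}) :
  (forall x y, x \in X -> y \in nbh a :\: X -> ~ type_equiv r x y) ->
  (forall x y, x \in P -> y \in nbh a -> ~ type_equiv r x y) ->
  forall y, y \in nbh a -> (y \in X <-> in_types r (X :|: P) y).
Proof.
move=> sepX sepP y ay; split=> [Xy|[[s /setUP[Xs|Ps]] /= sy]].
- by apply: in_types_mem; rewrite inE Xy.
- apply: contrapT => nXy; apply: (sepX s y Xs _ sy).
  by rewrite inE ay andbT; apply/negP.
- by case: (sepP s y Ps ay sy).
Qed.

Lemma p2wins_sym r att2 (a b : K) :
  p2wins QS r att2 a b -> p2wins QS r att2 b a.
Proof.
case: r => [|r] /=; rewrite eq_sym //; case: ifP => // _.
case: att2 => [[[] win]|win]; [exists false | exists true | case].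
- exact: win.
- exact: win.
- exact: (win false).
- exact: (win true).
Qed.

Section Round.
Variable r : nat.
Hypothesis defender_wins : forall a b : K, type_equiv r a b -> p2wins QS r false a b.
Hypothesis attacker_wins : forall a b : K, ~ type_equiv r a b -> p2wins QS r true a b.

Lemma defender_wins_step (a b : K) :
  type_equiv r.+1 a b -> p2wins QS r.+1 false a b.
Proof.
move=> ab; rewrite /= (type_equiv_labels ab) eqxx => s.
have {ab} : type_equiv r.+1 (if s then a else b) (if s then b else a).
  by case: s => //; exact: type_equiv_sym.
move: (if s then a else b) (if s then b else a) => {s}a {}b /type_equivS[_ QSab].
move=> [Q QSQ] [X [Xa QX]] /=.
case: (pselect (exists x y, [/\ x \in X, y \in nbh a :\: X & type_equiv r x y]))
  => [[x [y [Xx ay xy]]]|sepX].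
  by left; exists (exist _ x Xx), (exist _ y ay); exact: defender_wins.
right=> -[P Pb] /=.
case: (pselect (exists x y, [/\ x \in P, y \in nbh a & type_equiv r x y]))
  => [[x [y [Px ay xy]]]|sepP].
  by left; exists (exist _ x Px), (exist _ y ay); exact: defender_wins.
right; set S := X :|: P.
have XS : forall y, y \in nbh a -> (y \in X <-> in_types r S y).
  by apply: uncontested_in_types => x y Xx ay xy; [apply: sepX | apply: sepP]; exists x, y.
have QX' : gq_mem Q (fun y : {y | kE K b y} => val y \in nbh_types r b S).
  apply/gq_mem_nbh_types/(QSab Q QSQ S); apply: gq_mem_ext QX => -[y ay] /=.
  by apply: XS; rewrite inE.
have PX' : P \subset nbh_types r b S.
  apply/subsetP => y Py; apply/mem_nbh_types; split.
  - by move/subsetP/(_ y Py): Pb; rewrite inE.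
  - by apply: in_types_mem; rewrite inE Py orbT.
exists (exist _ (nbh_types r b S) (And3 (nbh_types_sub r b S) QX' PX')) => /=.
split; [|split].
- move=> [x X'x] [y by'] /=; move/mem_nbh_types: X'x => [_ Sx].
  exact/attacker_wins/(not_type_equiv_outside Sx by').
- move=> [y by'] [x Xx] /=; apply: attacker_wins => /type_equiv_sym.
  by apply: not_type_equiv_outside by'; apply: in_types_mem; rewrite inE Xx.
- move=> [y X'y] /=; move/mem_nbh_types: X'y => [_ [[x Sx] /= xy]].
  by exists (exist _ x Sx); exact/defender_wins/type_equiv_sym.
Qed.

Lemma attacker_wins_separating Q S (a b : K) :
  QS Q -> klab K a = klab K b -> mod_types r Q S a -> ~ mod_types r Q S b ->
  p2wins QS r.+1 true a b.
Proof.
move=> QSQ ab aS nbS; rewrite /= ab eqxx; exists true; exists (exist _ Q QSQ) => /=.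
(* The defender can contest neither these neighbours of b, nor leave them out of
   her answer X'. *)
pose P := [set y | kE K b y &
                   `[< in_types r S y /\ forall x, kE K a x -> ~ type_equiv r y x >]].
have QX : gq_mem Q (fun y : {y | kE K a y} => val y \in nbh_types r a S).
  exact/gq_mem_nbh_types.
exists (exist _ (nbh_types r a S) (conj (nbh_types_sub r a S) QX)) => /=; split.
  move=> [x Xx] [y ay] /=; move/mem_nbh_types: Xx => [_ Sx].
  exact/attacker_wins/(not_type_equiv_outside Sx ay).
have Pb : P \subset nbh b by apply/subsetP => y; rewrite !inE => /andP[].
have PS y : y \in P -> in_types r S y by rewrite inE => /andP[_ /asboolP[]].
exists (exist _ P Pb) => /=; split.
  move=> [x Px] [y ay] /=; apply: attacker_wins.
  by move: Px; rewrite inE => /andP[_ /asboolP[_]]; apply; rewrite inE in ay.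
move=> [X' [X'b QX' PX']] /=.
have [[y by'] /= X'S] := gq_mem_separate QX' nbS.
case: (boolP (y \in X')) => X'y.
  have nSy : ~ in_types r S y by move=> Sy; apply: X'S.
  right; right; exists (exist _ y X'y) => -[x /setUP XPx] /=.
  apply: attacker_wins => /type_equiv_sym xy; apply: nSy; apply: in_types_equiv xy.
  by case: XPx => [/mem_nbh_types[]|/PS].
have Sy : in_types r S y.
  by apply: contrapT => nSy; apply: X'S; split=> [X'y'|/nSy //]; rewrite X'y' in X'y.
have [x [ax yx]] : exists x, kE K a x /\ type_equiv r y x.
  apply: contrapT => nx; move/negP: X'y; apply; apply: (subsetP PX').
  by rewrite inE by' /=; apply/asboolP; split=> // x ax yx; apply: nx; exists x.
have Xx : x \in nbh_types r a S.
  by apply/mem_nbh_types; split; last exact: in_types_equiv Sy yx.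
have Ny : y \in nbh b :\: X' by rewrite !inE X'y by'.
by right; left; exists (exist _ y Ny), (exist _ x Xx); exact: defender_wins.
Qed.

Lemma attacker_wins_step (a b : K) :
  ~ type_equiv r.+1 a b -> p2wins QS r.+1 true a b.
Proof.
move=> nab; have [ab|] := eqVneq (klab K a) (klab K b); last by rewrite /= => ->.
have [Q QSQ [S [[aS nbS]|[bS naS]]]] := not_type_equivS ab nab.
  exact: attacker_wins_separating aS nbS.
by apply: p2wins_sym; apply: attacker_wins_separating bS naS.
Qed.

End Round.

Lemma p2wins_type_equiv r :
  (forall a b : K, type_equiv r a b -> p2wins QS r false a b) /\
  (forall a b : K, ~ type_equiv r a b -> p2wins QS r true a b).
Proof.
elim: r => [|r [def att]].
  split=> a b /=; first by move/sat_type0 => ->; rewrite eqxx.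
  by case: eqP => // ab []; apply/sat_type0.
split; [exact: defender_wins_step | exact: attacker_wins_step].
Qed.

End TypeEquivalence.

Section DisjointUnion.
Variables (Phi : finType) (M N : kripke Phi).

Definition inr_nbh (v : N) (y : {y : N | kE N v y}) :
    {y : dunion M N | kE (dunion M N) (inr v) y} :=
  exist _ (inr (proj1_sig y)) (proj2_sig y).

Definition inr_nbh_inv (v : N) (y : {y : dunion M N | kE (dunion M N) (inr v) y}) :
    {y : N | kE N v y} :=
  match y with
  | exist (inr n) vn => exist _ n vn
  | exist (inl _) vm => match notF vm with end
  end.

Lemma inr_nbhK v : cancel (@inr_nbh v) (@inr_nbh_inv v).
Proof. by case. Qed.

Lemma inr_nbh_invK v : cancel (@inr_nbh_inv v) (@inr_nbh v).
Proof. by case=> -[]. Qed.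

Lemma sat_dunion_inr (phi : form Phi) (v : N) :
  sat (M:=N) phi v <-> sat (M:=dunion M N) phi (inr v).
Proof.
elim: phi v => //=.
- by move=> phi IH v; split=> nphi /IH.
- by move=> phi IHphi psi IHpsi v; split=> -[/IHphi ? /IHpsi ?].
- by move=> phi IHphi psi IHpsi v; split=> -[/IHphi|/IHpsi]; auto.
- move=> Q phi IH v; split=> Qv.
  + by apply: (gq_iso (@inr_nbhK v) (@inr_nbh_invK v) _ Qv) => y; exact: iff_sym (IH _).
  + by apply: (gq_iso (@inr_nbh_invK v) (@inr_nbhK v) _ Qv) => -[[m|n] vy] //=; exact: IH.
- by move=> I F IH v; split=> Fv i; apply/IH.
- by move=> I F IH v; split=> -[i /IH]; exists i.
Qed.

End DisjointUnion.

Theorem lemmaB3 (Phi : finType) (QS : gquant -> Prop) (d : nat)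
  (M : kripke Phi) (w : M) (N : kripke Phi) (v : N) :
  @sat Phi N (qtype QS d (K := dunion M N) (inl w)) v ->
  bisim_d QS d w v.
Proof.
move=> Nv; apply: (p2wins_type_equiv QS (dunion M N) d).1.
exact: (sat_dunion_inr M _ v).1 Nv.
Qed.
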